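(* Let $G$ be a group of homeomorphisms of a topological space $X$ acting effectively, such that the topology of pointwise convergence $\tau_p$ is an admissible group topology on $G$. If $(G,\tau_\partial)$ is Roelcke precompact, then $(G,\tau_p)$ is Roelcke precompact. If $(G,\tau_p)$ is not Roelcke precompact, then $G$ is not Roelcke precompact in any admissible group topology.
   Context: Admissible group topology: $G$ is a topological group and the action $G\times X\to X$ is continuous. $\tau_p$: subbase $\{f\in G\mid f(x)\in O\}$, $x\in X$, $O$ open. $\tau_\partial$ (permutation topology): group topology whose identity neighbourhood subbase is formed by point stabilizers $\mathrm{St}_x=\{g\in G\mid g(x)=x\}$. Roelcke precompact: the Roelcke uniformity (greatest lower bound of left and right uniformities) is totally bounded. *)

From HB Require Import structures.
From mathcomp Require Import all_boot all_order.
From mathcomp Require Import boolp classical_sets cardinality topology.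

Set Implicit Arguments.
Unset Strict Implicit.
Unset Printing Implicit Defensive.

Local Open Scope classical_set_scope.

Record group := Group {
  gcarrier :> Type;
  gmul : gcarrier -> gcarrier -> gcarrier;
  ginv : gcarrier -> gcarrier;
  gone : gcarrier;
  gmulA : forall a b c, gmul a (gmul b c) = gmul (gmul a b) c;
  gmul1g : forall a, gmul gone a = a;
  gmulg1 : forall a, gmul a gone = a;
  gmulVg : forall a, gmul (ginv a) a = gone;
  gmulgV : forall a, gmul a (ginv a) = gone }.

Section Defs.
Variable G : group.
Local Notation "a * b" := (gmul a b).
Local Notation "a ^-1" := (ginv a).
Local Notation "1" := (gone G).

Definition is_topology (T : set (set G)) : Prop :=
  T setT /\
  (forall A B, T A -> T B -> T (A `&` B)) /\
  (forall (I : Type) (F : I -> set G), (forall i, T (F i)) -> T (\bigcup_i F i)).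

Definition generated_topology (S : set (set G)) : set (set G) :=
  fun A => forall T, is_topology T -> S `<=` T -> T A.

Definition is_group_topology (T : set (set G)) : Prop :=
  is_topology T /\
  (forall g h W, T W -> W (g * h) ->
     exists U V, [/\ T U, U g, T V, V h &
       forall u v, U u -> V v -> W (u * v)]) /\
  (forall g W, T W -> W (g^-1) ->
     exists U, [/\ T U, U g & forall u, U u -> W (u^-1)]).

Section Action.
Variable X : topologicalType.
Variable act : G -> X -> X.

Definition homeo_action : Prop :=
  (forall x, act 1 x = x) /\
  (forall g h x, act (g * h) x = act g (act h x)) /\
  (forall g, continuous (act g)).

Definition effective : Prop :=
  forall g h, (forall x, act g x = act h x) -> g = h.

Definition admissible (T : set (set G)) : Prop :=
  is_group_topology T /\
  (forall g x O, open O -> O (act g x) ->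
     exists U V, [/\ T U, U g, open V, V x &
       forall h y, U h -> V y -> O (act h y)]).

Definition tau_p : set (set G) :=
  generated_topology
    (fun A => exists x O, open O /\ A = [set f | O (act f x)]).

(* Permutation topology tau_partial: identity neighbourhood subbase formed
   by the point stabilizers St_x; a set U is open iff every g in U has a
   neighbourhood g (St_x1 /\ ... /\ St_xn) contained in U. *)
Definition tau_partial : set (set G) :=
  fun U => forall g, U g -> exists F : set X, finite_set F /\
    forall h, (forall x, F x -> act h x = x) -> U (g * h).
End Action.

Definition compose_rel (D E : set (G * G)) : set (G * G) :=
  [set p | exists z, D (p.1, z) /\ E (z, p.2)].

Definition is_uniformity (Uf : set (set (G * G))) : Prop :=
  Uf setT /\
  (forall D E, Uf D -> D `<=` E -> Uf E) /\
  (forall D E, Uf D -> Uf E -> Uf (D `&` E)) /\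
  (forall E, Uf E -> forall g, E (g, g)) /\
  (forall E, Uf E -> Uf [set p | E (p.2, p.1)]) /\
  (forall E, Uf E -> exists D, Uf D /\ compose_rel D D `<=` E).

Definition left_uniformity (T : set (set G)) : set (set (G * G)) :=
  fun E => exists V, [/\ T V, V 1 & forall g h, V (g^-1 * h) -> E (g, h)].

Definition right_uniformity (T : set (set G)) : set (set (G * G)) :=
  fun E => exists V, [/\ T V, V 1 & forall g h, V (h * g^-1) -> E (g, h)].

(* Roelcke uniformity: the greatest lower bound of the left and right
   uniformities, i.e. the union of all uniformities coarser than both
   (this family is directed, so its union is the greatest lower bound). *)
Definition roelcke_uniformity (T : set (set G)) : set (set (G * G)) :=
  fun E => exists Uf, [/\ is_uniformity Uf, Uf `<=` left_uniformity T,
                          Uf `<=` right_uniformity T & Uf E].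

Definition totally_bounded (Uf : set (set (G * G))) : Prop :=
  forall E, Uf E -> exists F : set G, finite_set F /\
    forall g, exists f, F f /\ E (f, g).

Definition roelcke_precompact (T : set (set G)) : Prop :=
  totally_bounded (roelcke_uniformity T).

End Defs.

(* Roelcke precompactness passes from a group topology to any coarser one,
   since coarsening shrinks the left, right and hence Roelcke uniformities.
   The pointwise topology is coarser than the permutation topology (the
   basic set {f | f x in O} contains g St_x around each of its points g) and
   coarser than every admissible topology (continuity of the orbit map
   h |-> h x). *)

From mathcomp Require Import all_boot all_order.
From mathcomp Require Import boolp classical_sets cardinality topology.

Local Open Scope classical_set_scope.

Section Coarsening.
Context {G : group}.

Lemma left_uniformity_mono (T T' : set (set G)) :
  T `<=` T' -> left_uniformity T `<=` left_uniformity T'.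
Proof. by move=> sTT' E [V [TV V1 VE]]; exists V; split => //; apply: sTT'. Qed.

Lemma right_uniformity_mono (T T' : set (set G)) :
  T `<=` T' -> right_uniformity T `<=` right_uniformity T'.
Proof. by move=> sTT' E [V [TV V1 VE]]; exists V; split => //; apply: sTT'. Qed.

Lemma roelcke_uniformity_mono (T T' : set (set G)) :
  T `<=` T' -> roelcke_uniformity T `<=` roelcke_uniformity T'.
Proof.
move=> sTT' E [Uf [unifU UfL UfR UfE]]; exists Uf; split => //.
- by move=> D /UfL; apply: left_uniformity_mono.
- by move=> D /UfR; apply: right_uniformity_mono.
Qed.

Lemma totally_bounded_sub (Uf Uf' : set (set (G * G))) :
  Uf `<=` Uf' -> totally_bounded Uf' -> totally_bounded Uf.
Proof. by move=> sUf tbUf' E /sUf; apply: tbUf'. Qed.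

Lemma roelcke_precompact_coarser (T T' : set (set G)) :
  T `<=` T' -> roelcke_precompact T' -> roelcke_precompact T.
Proof. by move=> /roelcke_uniformity_mono; apply: totally_bounded_sub. Qed.

Lemma generated_topology_min (S T : set (set G)) :
  is_topology T -> S `<=` T -> generated_topology S `<=` T.
Proof. by move=> topT sST A; apply. Qed.

Lemma topology_open_local (T : set (set G)) (A : set G) :
  is_topology T -> (forall g, A g -> exists U, [/\ T U, U g & U `<=` A]) ->
  T A.
Proof.
move=> [_ [_ topU]] locA.
pose I := {U : set G | T U /\ U `<=` A}.
have -> : A = \bigcup_(i : I) proj1_sig i.
  apply/seteqP; split=> [g Ag | g [[U [_ sUA]] _ /= Ug]]; last exact: sUA.
  have [U [TU Ug sUA]] := locA g Ag.
  by exists (exist _ U (conj TU sUA)).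
by apply: topU => -[U []].
Qed.

End Coarsening.

Section PointwiseTopology.
Context {G : group} {X : topologicalType} {act : G -> X -> X}.

Lemma is_topology_tau_partial : is_topology (tau_partial act).
Proof.
split; [|split].
- by move=> g _; exists set0; split; first exact: finite_set0.
- move=> A B tA tB g [Ag Bg].
  have [FA [finFA FAA]] := tA g Ag.
  have [FB [finFB FBB]] := tB g Bg.
  exists (FA `|` FB); split; first by rewrite finite_setU.
  by move=> h fixh; split; [apply: FAA | apply: FBB] => x Fx; apply: fixh;
    [left | right].
- move=> I F tF g [i _ Fig].
  have [Fi [finFi FiF]] := tF i g Fig.
  by exists Fi; split => // h fixh; exists i => //; apply: FiF.
Qed.

Lemma tau_p_le_tau_partial :
  (forall g h x, act (gmul g h) x = act g (act h x)) ->
  tau_p act `<=` tau_partial act.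
Proof.
move=> actM; apply: generated_topology_min; first exact: is_topology_tau_partial.
move=> _ [x [O [_ ->]]] g Ogx; exists [set x]; split; first exact: finite_set1.
by move=> h fixh /=; rewrite actM fixh.
Qed.

Lemma tau_p_le_admissible {T : set (set G)} :
  admissible act T -> tau_p act `<=` T.
Proof.
move=> [[topT _] actT]; apply: generated_topology_min => // _ [x [O [oO ->]]].
apply: topology_open_local => // g Ogx.
have [U [V [TU Ug _ Vx UVO]]] := actT g x O oO Ogx.
by exists U; split => // h Uh; apply: UVO Vx.
Qed.

End PointwiseTopology.

Theorem corollary1p2 (G : group) (X : topologicalType) (act : G -> X -> X) :
  homeo_action act -> effective act -> admissible act (tau_p act) ->
  (roelcke_precompact (tau_partial act) -> roelcke_precompact (tau_p act)) /\
  (~ roelcke_precompact (tau_p act) ->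
     forall T : set (set G), admissible act T -> ~ roelcke_precompact T).
Proof.
move=> [_ [actM _]] _ _; split.
- exact/roelcke_precompact_coarser/tau_p_le_tau_partial.
- move=> not_rp_p T admT rpT; apply: not_rp_p.
  exact: roelcke_precompact_coarser (tau_p_le_admissible admT) rpT.
Qed.
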